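(* Let $G$ be a finite group and let $R(G)$ be its solvable radical. For $g\in G$, we have $g\notin R(G)$ if and only if there exist an integer $n\ge 1$ and elements $x_1,\dots,x_n\in G$ such that the subgroup $\langle [g,x_1],\dots,[g,x_n]\rangle$ is not solvable.
   Context: The commutator is $[x,y]=xyx^{-1}y^{-1}$. The solvable radical $R(G)$ is the largest solvable normal subgroup of $G$. *)

From mathcomp Require Import all_boot all_fingroup all_solvable.
Set Implicit Arguments. Unset Strict Implicit. Unset Printing Implicit Defensive.
Local Open Scope group_scope.

(* Paper's commutator convention: [x,y] = x y x^-1 y^-1. *)
Definition pcomm (gT : finGroupType) (x y : gT) : gT := x * y * x^-1 * y^-1.

Definition solrad (gT : finGroupType) (G : {set gT}) : {set gT} :=
  <<\bigcup_(H : {group gT} | (H <| G) && solvable H) H>>.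

From mathcomp Require Import all_boot all_fingroup all_solvable.
Set Implicit Arguments. Unset Strict Implicit. Unset Printing Implicit Defensive.
Local Open Scope group_scope.

(* If g lies outside the radical R, take all x in G: the commutators [g,x]
   generate N = [g^-1, G], which is normalised by G, and <g>N is a normal
   subgroup of G containing g with <g>N/N cyclic.  Were N solvable, <g>N would
   be a solvable normal subgroup, hence inside R.  Conversely, if g is in R
   then every [g,x] = g (g^-1)^(x^-1) lies in the normal subgroup R, which is
   solvable. *)

Section SolvableRadical.

Variable gT : finGroupType.
Implicit Types (A : {set gT}) (G H K : {group gT}) (g x : gT).

Lemma solvable_joing_norm H K :
  K \subset 'N(H) -> solvable K -> solvable (K <*> H) = solvable H.
Proof.
move=> nHK solK.
have nH_KH : H <| K <*> H by rewrite /normal joing_subr join_subG nHK normG.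
by rewrite (series_sol nH_KH) quotientYidr // quotient_sol // andbT.
Qed.

Lemma solrad_normal_sol G : (solrad G <| G) && solvable (solrad G).
Proof.
rewrite /solrad; elim/big_rec: _ => [|H X /andP[nHG solH] /andP[nXG solX]].
  by rewrite gen0 normal1 solvable1.
rewrite -[<<_ :|: X>>]/(H <*> X) -joing_idr normalY //= joingC solvable_joing_norm //.
exact: subset_trans (normal_sub nXG) (normal_norm nHG).
Qed.

Lemma sub_solrad G H : H <| G -> solvable H -> H \subset solrad G.
Proof. by move=> nHG solH; rewrite sub_gen // (bigcup_max H) ?nHG. Qed.

Lemma gen_joing_commg_normal A G : A \subset G -> <<A>> <*> [~: A, G] <| G.
Proof.
move=> sAG; have nNG := commg_normr G A.
have sNG : [~: A, G] \subset G by rewrite (subset_trans (commg_sub A G)) // (joing_idPr sAG).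
rewrite /normal join_subG gen_subG sAG sNG /= joing_idl.
apply/subsetP => y Gy; rewrite inE -genJ gen_subG conjUg subUset.
rewrite (normP (subsetP nNG y Gy)) [X in _ && X]sub_gen ?subsetUr // andbT.
apply/subsetP => _ /imsetP[a Aa ->]; rewrite conjg_mulR.
by rewrite groupM ?(subsetP (joing_subl A _) a) ?(subsetP (joing_subr A _)) ?mem_commg.
Qed.

Lemma pcommE g x : pcomm g x = [~ g^-1, x^-1].
Proof. by rewrite /pcomm /commg /conjg !invgK !mulgA. Qed.

Lemma pcomm_norm_mem H g x : g \in H -> x \in 'N(H) -> pcomm g x \in H.
Proof.
move=> Hg nHx; have sRH : [~: H, <[x^-1]>] \subset H by rewrite commg_subl cycle_subG groupV.
by rewrite pcommE (subsetP sRH) // mem_commg ?cycle_id ?groupV.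
Qed.

Lemma pcomm_enum_set G g :
  [set pcomm g (enum_val i) | i : 'I_#|G|] = commg_set [set g^-1] G.
Proof.
apply/setP => z; apply/imsetP/imset2P => [[i _ ->] | [_ y /set1P-> Gy ->]].
  by exists g^-1 (enum_val i)^-1; rewrite ?set11 ?groupV ?enum_valP ?pcommE.
have Gy' : y^-1 \in G by rewrite groupV.
by exists (enum_rank_in Gy' y^-1); rewrite // enum_rankK_in // pcommE invgK.
Qed.

End SolvableRadical.

Theorem corollary1p13 (gT : finGroupType) (G : {group gT}) (g : gT) :
  g \in G ->
  (g \notin solrad G <->
   exists (n : nat) (x : 'I_n -> gT),
     (1 <= n)%N /\ (forall i, x i \in G) /\
     ~~ solvable <<[set pcomm g (x i) | i : 'I_n]>>).
Proof.
move=> Gg; have /andP[nRG solR] := solrad_normal_sol G; split.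
  move=> notRg; exists #|G|, enum_val; split; first exact: cardG_gt0.
  split=> [i|]; first exact: enum_valP.
  rewrite pcomm_enum_set; apply: contra notRg => solN.
  have sgG : [set g^-1] \subset G by rewrite sub1set groupV.
  have nMG := gen_joing_commg_normal sgG.
  have nNg : <[g^-1]> \subset 'N([~: [set g^-1], G]).
    by rewrite cycle_subG (subsetP (commg_normr G _)) ?groupV.
  have solM : solvable (<[g^-1]> <*> [~: [set g^-1], G]).
    by rewrite solvable_joing_norm // abelian_sol ?cycle_abelian.
  rewrite -groupV (subsetP (sub_solrad nMG solM)) //.
  by rewrite (subsetP (joing_subl _ _)) ?cycle_id.
case=> n [x [_ [Gx]]]; apply: contraNN => Rg; apply: solvableS solR.
rewrite gen_subG; apply/subsetP => _ /imsetP[i _ ->].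
by rewrite pcomm_norm_mem // (subsetP (normal_norm nRG)).
Qed.
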